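(* Let $\mathcal{M}=(S,E,T)$ be a trivially parametric Markov chain satisfying the standing assumptions below, and let $\{S_0,\dots,S_m\}$ be an equivalence partition of $\mathcal{M}$. Then there exists a graph-preserving valuation $\mathsf{val}$ such that for all $0\le i<j\le m$, all $s_i\in S_i$ and all $s_j\in S_j$, $P_{\mathsf{val}}(s_i)<P_{\mathsf{val}}(s_j)$.
   Context: A trivially parametric Markov chain $\mathcal{M}=(S,E,T)$ consists of a finite set of states $S$, targets $T=\{\mathit{fin},\mathit{fail}\}$ with no outgoing edges, and edges $E\subseteq(S\setminus T)\times S$. A graph-preserving valuation assigns to each non-target $s$ a full-support probability distribution on its successor set $sE$; $P_{\mathsf{val}}(s)$ is the probability of reaching $\mathit{fin}$ from $s$. $s\sim s'$ iff $P_{\mathsf{val}}(s)=P_{\mathsf{val}}(s')$ for all graph-preserving valuations; $\tilde u$ is the equivalence class of $u$. An equivalence partition is a partition $\{S_0,\dots,S_m\}$ of $S$ into non-empty sets such that $S_0=\{\mathit{fail}\}$, $S_m=\{\mathit{fin}\}$, for every non-target $u$ we have $\tilde u\subseteq S_i$ for some $0<i<m$, and every $u\in S_j$ either has successors in some $S_i$ and some $S_k$ with $i<j<k$ or has all its successors in $S_j$. Standing assumptions: the equivalence classes of $\mathit{fin}$ and $\mathit{fail}$ are $\{\mathit{fin}\}$ and $\{\mathit{fail}\}$; no state has a self-loop; every non-target state has exactly two successors. *)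

From HB Require Import structures.
From mathcomp Require Import all_boot all_order all_algebra.
From mathcomp Require Import all_classical all_reals all_analysis.
Set Implicit Arguments. Unset Strict Implicit. Unset Printing Implicit Defensive.
Import Order.TTheory GRing.Theory Num.Theory numFieldNormedType.Exports.
Local Open Scope ring_scope.

Section MC.
Variables (R : realType) (S : finType) (fin fail : S) (E : rel S).

Definition is_target (s : S) : bool := (s == fin) || (s == fail).

(* A graph-preserving valuation: each non-target s gets a probability
   distribution on its successor set sE with full support.  Values at
   targets are irrelevant (targets have no outgoing edges). *)
Definition graph_preserving (val : S -> S -> R) : Prop :=
  forall s, ~~ is_target s ->
    [/\ forall t, E s t -> 0 < val s t,
        forall t, ~~ E s t -> val s t = 0
      & \sum_(t : S) val s t = 1].

Fixpoint reach_n (val : S -> S -> R) (n : nat) (s : S) : R :=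
  match n with
  | 0 => if s == fin then 1 else 0
  | n'.+1 => if s == fin then 1 else if s == fail then 0
             else \sum_(t : S) val s t * reach_n val n' t
  end.

(* P_val(s): probability of eventually reaching fin from s
   (limit of the nondecreasing bounded sequence reach_n). *)
Definition Pval (val : S -> S -> R) (s : S) : R :=
  limn (fun n => reach_n val n s).

Definition mc_equiv (s s' : S) : Prop :=
  forall val, graph_preserving val -> Pval val s = Pval val s'.

Definition standing_assumptions : Prop :=
  [/\ fin != fail,
      (forall t, ~~ E fin t /\ ~~ E fail t),
      (forall s, mc_equiv s fin -> s = fin) /\
      (forall s, mc_equiv s fail -> s = fail),
      (forall s, ~~ E s s)
    & (forall s, ~~ is_target s -> #|[set t | E s t]| = 2)].

(* An equivalence partition {S_0,...,S_m}, encoded by the block index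
   part : S -> 'I_m.+1 (S_i = {s | part s = i}). *)
Definition mc_equivalence_partition (m : nat) (part : S -> 'I_m.+1) : Prop :=
  [/\ (forall i : 'I_m.+1, exists s, part s = i),
      (forall s, (part s = ord0 <-> s = fail)),
      (forall s, (part s = ord_max <-> s = fin)),
      (forall u, ~~ is_target u ->
         (0 < (part u : nat))%N /\ ((part u : nat) < m)%N /\
         forall v, mc_equiv u v -> part v = part u)
    & (forall u,
         (exists v w, [/\ E u v, E u w, ((part v : nat) < part u)%N
                         & ((part u : nat) < part w)%N])
         \/ (forall v, E u v -> part v = part u))].

End MC.

From HB Require Import structures.
From mathcomp Require Import all_boot all_order all_algebra.
From mathcomp Require Import all_classical all_reals all_analysis.
Import Order.TTheory GRing.Theory Num.Theory numFieldNormedType.Exports.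
Set Implicit Arguments. Unset Strict Implicit.
Local Open Scope ring_scope.
Local Open Scope classical_set_scope.

(* Put the states of S_i at height i and weight each edge u -> t by the
   inverse of the height difference (or 1 inside a level).  Then the two edges
   leaving a mixed state balance out, so the normalised height f = i/m is
   harmonic for the resulting valuation, with f fin = 1 and f fail = 0.  A
   bounded harmonic function with these boundary values equals P_val as soon
   as the chain leaves the non-targets almost surely; and it does, since a
   closed set of states from which no target is reachable would consist of
   states equivalent to fail, which the standing assumptions exclude.  So
   P_val is strictly increasing along the levels. *)

Lemma Pval_eq0 (R : realType) (S : finType) (fin fail : S) (val : S -> S -> R) s :
  (forall n, reach_n fin fail val n s = 0) -> Pval fin fail val s = 0.
Proof.
move=> reach0; rewrite /Pval.
have -> : (fun n => reach_n fin fail val n s) = (fun=> 0) by apply: funext.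
exact: lim_cst.
Qed.

Section Survival.
Variables (R : realType) (S : finType) (fin fail : S) (E : rel S) (val : S -> S -> R).
Hypothesis val_gp : graph_preserving fin fail E val.

Local Notation is_target := (is_target fin fail).

Lemma val_ge0 s t : ~~ is_target s -> 0 <= val s t.
Proof.
move=> ns; have [val_gt0 val_eq0 _] := val_gp ns.
by case Est: (E s t); [apply/ltW/val_gt0 | rewrite val_eq0 ?Est].
Qed.

Fixpoint survive_n (n : nat) (s : S) : R :=
  if is_target s then 0 else
  if n is n'.+1 then \sum_t val s t * survive_n n' t else 1.

Lemma survive_n_target n s : is_target s -> survive_n n s = 0.
Proof. by case: n => [|n] /= ->. Qed.

Lemma survive_n_ge0 n s : 0 <= survive_n n s.
Proof.
elim: n s => [|n IH] s /=; case: ifP => ns //.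
by apply: sumr_ge0 => t _; rewrite mulr_ge0 ?val_ge0 ?ns.
Qed.

Lemma survive_n_le1 n s : survive_n n s <= 1.
Proof.
elim: n s => [|n IH] s /=; case: ifP => ns //.
have [_ _ <-] := val_gp (negbT ns).
by apply: ler_sum => t _; rewrite ler_piMr ?val_ge0 ?ns.
Qed.

Lemma survive_n_succ_le n s : survive_n n.+1 s <= survive_n n s.
Proof.
elim: n s => [|n IH] s; first by have := survive_n_le1 1 s; rewrite /=; case: ifP.
rewrite /=; case: ifP => ns //.
by apply: ler_sum => t _; apply: ler_wpM2l; rewrite ?val_ge0 ?ns ?IH.
Qed.

Lemma survive_n_le n n' s : (n <= n')%N -> survive_n n' s <= survive_n n s.
Proof.
apply: (@homo_leq _ (survive_n^~ s) (fun x y => y <= x)) => [x|y x z /[swap]|k].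
- exact: lexx.
- exact: le_trans.
- exact: survive_n_succ_le.
Qed.

Lemma survive_n_addn a b s (H : R) : 0 <= H ->
  (forall t, survive_n a t <= H) -> survive_n (a + b) s <= H * survive_n b s.
Proof.
move=> H_ge0 survive_a; elim: b s => [|b IH] s.
  rewrite addn0 /=; case: ifP => ns; last by rewrite mulr1.
  by rewrite survive_n_target ?mulr0.
rewrite addnS /=; case: ifP => ns; first by rewrite mulr0.
rewrite mulr_sumr; apply: ler_sum => t _.
by rewrite mulrCA; apply: ler_wpM2l; rewrite ?val_ge0 ?ns ?IH.
Qed.

Lemma survive_n_mul_le N k s (q : R) : 0 <= q ->
  (forall t, survive_n N t <= q) -> survive_n (k * N) s <= q ^+ k.
Proof.
move=> q_ge0 survive_N; elim: k s => [|k IH] s; first exact: survive_n_le1.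
rewrite mulSn; apply: le_trans (survive_n_addn _ _ q_ge0 survive_N) _.
by rewrite exprS; apply: ler_wpM2l.
Qed.

Definition trapped s : Prop := forall n, survive_n n s = 1.

Lemma trapped_nontarget s : trapped s -> ~~ is_target s.
Proof. by move=> /(_ 0%N) /=; case: (is_target s) => // /esym/eqP; rewrite oner_eq0. Qed.

Lemma trapped_succ s t : trapped s -> E s t -> trapped t.
Proof.
move=> trap_s Est n; have ns := trapped_nontarget trap_s.
have [val_gt0 _ val_sum1] := val_gp ns.
have loss0 : \sum_u val s u * (1 - survive_n n u) = 0.
  have := trap_s n.+1; rewrite /= (negPf ns) => survive1.
  by under eq_bigr do rewrite mulrBr mulr1; rewrite sumrB val_sum1 survive1 subrr.
have loss_ge0 u : true -> 0 <= val s u * (1 - survive_n n u).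
  by rewrite mulr_ge0 ?val_ge0 ?subr_ge0 ?survive_n_le1.
have /eqP := psumr_eq0P loss_ge0 loss0 (i := t) isT.
by rewrite mulf_eq0 gt_eqF ?val_gt0 //= subr_eq0 => /eqP <-.
Qed.

Lemma reach_n_trapped (val' : S -> S -> R) n s : graph_preserving fin fail E val' ->
  trapped s -> reach_n fin fail val' n s = 0.
Proof.
move=> val'_gp; elim: n s => [|n IH] s trap_s /=;
  have := trapped_nontarget trap_s; rewrite /is_target negb_or => /andP[nf nfl];
  rewrite (negPf nf) ?(negPf nfl) //.
apply: big1 => t _; case Est: (E s t); first by rewrite (IH t (trapped_succ trap_s Est)) mulr0.
have [_ val'_eq0 _] := val'_gp s (trapped_nontarget trap_s).
by rewrite val'_eq0 ?Est ?mul0r.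
Qed.

Lemma trapped_equiv_fail s : fin != fail -> trapped s -> mc_equiv R fin fail E s fail.
Proof.
move=> fin_fail trap_s val' val'_gp.
rewrite !Pval_eq0 // => n; last exact: reach_n_trapped.
by case: n => [|n] /=; rewrite eq_sym (negPf fin_fail) ?eqxx.
Qed.

Lemma survive_n_escape : standing_assumptions R fin fail E ->
  forall s, exists n, survive_n n s < 1.
Proof.
case=> fin_fail _ [_ equiv_fail] _ _ s.
have [//|stuck] := pselect (exists n, survive_n n s < 1).
have trap_s : trapped s.
  move=> n; apply/eqP; rewrite eq_le survive_n_le1 leNgt /=.
  by apply/negP => lt1; apply: stuck; exists n.
have := trapped_nontarget trap_s.
by rewrite (equiv_fail s (trapped_equiv_fail fin_fail trap_s)) /is_target eqxx orbT.
Qed.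

Hypothesis escape : forall s, exists n, survive_n n s < 1.

Lemma survive_n_uniform :
  exists N (q : R), [/\ 0 <= q, q < 1 & forall s, survive_n N s <= q].
Proof.
have [n_ n_escape] := fin_all_exists escape.
pose N := (\max_s n_ s)%N.
exists N, (survive_n N [arg max_(s > fin) survive_n N s]%O).
case: arg_maxP => // s0 _ s0_max; split=> [||s]; last exact: s0_max.
- exact: survive_n_ge0.
- exact: le_lt_trans (survive_n_le _ (leq_bigmax s0)) (n_escape s0).
Qed.

Lemma survive_n_cvg0 s : survive_n n s @[n --> \oo] --> 0.
Proof.
have [N [q [q_ge0 q_lt1 survive_N]]] := survive_n_uniform.
apply/cvgrPdist_le => e e_gt0.
have /cvgrPdist_le/(_ e e_gt0)[k _ qk_le] : q ^+ n @[n --> \oo] --> 0.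
  by apply: cvg_expr; rewrite ger0_norm.
exists (k * N)%N => // n /= kN_le_n.
rewrite sub0r normrN ger0_norm ?survive_n_ge0 //.
apply: le_trans (survive_n_le s kN_le_n) _.
apply: le_trans (survive_n_mul_le k s q_ge0 survive_N) _.
by have := qk_le k (leqnn k); rewrite sub0r normrN ger0_norm ?exprn_ge0.
Qed.

Definition harmonic (f : S -> R) : Prop :=
  forall s, ~~ is_target s -> \sum_t val s t * f t = f s.

Variable f : S -> R.
Hypotheses (f_fin : f fin = 1) (f_fail : f fail = 0)
  (f_ge0 : forall s, 0 <= f s) (f_le1 : forall s, f s <= 1)
  (f_harmonic : harmonic f).

Lemma harmonic_reach_n_gap n s :
  0 <= f s - reach_n fin fail val n s <= survive_n n s.
Proof.
have fail_fin : fail != fin.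
  by apply: contra_neq (@oner_neq0 R) => ff; rewrite -f_fin -ff.
elim: n s => [|n IH] s; have [/orP[/eqP->|/eqP->]|ns] := boolP (is_target s);
  rewrite /= ?eqxx ?(negPf fail_fin) ?survive_n_target /is_target ?eqxx ?orbT //
    ?f_fin ?f_fail ?subrr ?lexx //.
all: have := ns; rewrite /is_target negb_or => /andP[/negPf-> /negPf->] /=.
  by rewrite subr0 f_ge0 f_le1.
rewrite -(f_harmonic ns) -sumrB.
have /(_ _)/andP gap_t := IH; apply/andP; split.
  by apply: sumr_ge0 => t _; rewrite -mulrBr mulr_ge0 ?val_ge0 ?(gap_t t).1.
by apply: ler_sum => t _; rewrite -mulrBr; apply: ler_wpM2l; rewrite ?val_ge0 ?(gap_t t).2.
Qed.

Lemma Pval_eq_harmonic s : Pval fin fail val s = f s.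
Proof.
apply: cvg_lim => //.
have gap_cvg0 : f s - reach_n fin fail val n s @[n --> \oo] --> 0.
  apply: (squeeze_cvgr _ (cvg_cst 0) (survive_n_cvg0 s)).
  by near=> n; apply: harmonic_reach_n_gap.
have -> : (fun n => reach_n fin fail val n s) =
          (fun n => f s - (f s - reach_n fin fail val n s)).
  by apply: funext => n; rewrite opprB addrC subrK.
by rewrite -[X in _ --> X](subr0 (f s)); apply: cvgB => //; apply: cvg_cst.
Unshelve. all: by end_near.
Qed.

End Survival.

Lemma standing_succ (R : realType) (S : finType) (fin fail : S) (E : rel S) u :
  standing_assumptions R fin fail E -> ~~ is_target fin fail u -> exists t, E u t.
Proof.
case=> _ _ _ _ card2 nu.
have : (0 < #|[set t | E u t]%SET|)%N by rewrite card2.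
by case/card_gt0P => t; rewrite inE; exists t.
Qed.

Lemma succ_card2 (S : finType) (E : rel S) u v w :
  #|[set t | E u t]%SET| = 2 -> v != w -> E u v -> E u w ->
  forall t, E u t -> (t == v) || (t == w).
Proof.
move=> card2 vw Euv Euw t Eut.
have /eqP succ_u : [set v; w]%SET == [set t | E u t]%SET.
  rewrite eqEcard card2 cards2 vw leqnn andbT.
  by apply/fintype.subsetP => x; rewrite !inE => /orP[] /eqP ->.
by move/setP/(_ t): succ_u; rewrite !inE Eut.
Qed.

Section LevelValuation.
Variables (R : realType) (S : finType) (fin fail : S) (E : rel S).
Variables (m : nat) (part : S -> 'I_m.+1).

Definition level (s : S) : R := (part s)%:R.

Definition level_weight (u t : S) : R :=
  if E u t then if part t == part u then 1 else `|level t - level u|^-1 else 0.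

Definition level_val (u t : S) : R := level_weight u t / \sum_t' level_weight u t'.

Lemma level_weight_ge0 u t : 0 <= level_weight u t.
Proof. by rewrite /level_weight; case: (E u t) => //; case: ifP; rewrite ?invr_ge0. Qed.

Lemma subr_level_neq0 u t : part t != part u -> level t - level u != 0.
Proof. by rewrite subr_eq0 /level eqr_nat. Qed.

Lemma level_weight_gt0 u t : E u t -> 0 < level_weight u t.
Proof.
move=> Eut; rewrite /level_weight Eut; case: ifP => // /negbT ne.
by rewrite invr_gt0 normr_gt0 subr_level_neq0.
Qed.

Lemma level_weight_sum_gt0 u t : E u t -> 0 < \sum_t' level_weight u t'.
Proof.
move=> Eut; rewrite (bigD1 t) //= ltr_wpDr ?level_weight_gt0 //.
by apply: sumr_ge0 => t' _; apply: level_weight_ge0.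
Qed.

Lemma level_val_graph_preserving :
  (forall u, ~~ is_target fin fail u -> exists t, E u t) ->
  graph_preserving fin fail E level_val.
Proof.
move=> succ u /succ[t Eut]; have Z_gt0 := level_weight_sum_gt0 Eut; split.
- by move=> t' Eut'; rewrite divr_gt0 ?level_weight_gt0.
- by move=> t' /negPf nEut'; rewrite /level_val /level_weight nEut' mul0r.
- by rewrite /level_val -mulr_suml divff ?gt_eqF.
Qed.

Lemma level_weight_balanced u :
  #|[set t | E u t]%SET| = 2 ->
  (exists v w, [/\ E u v, E u w, (part v < part u)%N & (part u < part w)%N])
    \/ (forall v, E u v -> part v = part u) ->
  \sum_t level_weight u t * (level t - level u) = 0.
Proof.
move=> card2 [[v [w [Euv Euw lt_vu lt_uw]]]|flat]; last first.
  apply: big1 => t _; rewrite /level_weight; case Eut: (E u t); last by rewrite mul0r.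
  by rewrite /level (flat t Eut) subrr mulr0.
have vw : v != w by apply: contraTneq (ltn_trans lt_vu lt_uw) => ->; rewrite ltnn.
rewrite (bigD1 v) //= (bigD1 w) 1?eq_sym //= big1 ?addr0; last first.
  move=> t /andP[tv tw]; rewrite /level_weight; case Eut: (E u t); last by rewrite mul0r.
  by move: (succ_card2 card2 vw Euv Euw Eut); rewrite (negPf tv) (negPf tw).
have ne_vu : part v != part u by rewrite -(inj_eq val_inj) neq_ltn lt_vu.
have ne_wu : part w != part u by rewrite -(inj_eq val_inj) neq_ltn lt_uw orbT.
have below : level v - level u < 0 by rewrite subr_lt0 /level ltr_nat.
have above : 0 < level w - level u by rewrite subr_gt0 /level ltr_nat.
rewrite /level_weight Euv Euw (negPf ne_vu) (negPf ne_wu).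
rewrite (ltr0_norm below) (gtr0_norm above) invrN mulNr !mulVf ?subr_level_neq0 //.
by rewrite addNr.
Qed.

Hypotheses (SA : standing_assumptions R fin fail E)
  (PART : mc_equivalence_partition R fin fail E part).

Lemma level_val_harmonic : harmonic fin fail level_val (fun s => level s / m%:R).
Proof.
case: SA => _ _ _ _ card2; case: PART => _ _ _ _ mix.
move=> u nu; have [t Eut] := standing_succ SA nu.
under eq_bigr do rewrite mulrA.
rewrite -mulr_suml; congr (_ / _).
have := level_weight_balanced (card2 u nu) (mix u).
under eq_bigr do rewrite mulrBr.
rewrite sumrB -mulr_suml => /eqP; rewrite subr_eq0 => /eqP balance.
rewrite /level_val; under eq_bigr do rewrite mulrAC.
rewrite -mulr_suml balance.
by rewrite mulrAC divff ?mul1r ?gt_eqF ?(level_weight_sum_gt0 Eut).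
Qed.

Lemma Pval_level_val s : Pval fin fail level_val s = level s / m%:R.
Proof.
have val_gp := level_val_graph_preserving (fun u => standing_succ SA (u := u)).
case: PART => _ fail_part fin_part _ _.
have level_fin : level fin = m%:R by rewrite /level (fin_part fin).2.
have level_fail : level fail = 0 by rewrite /level (fail_part fail).2.
have m_gt0 : 0 < m%:R :> R.
  case: SA => fin_fail _ _ _ _; rewrite ltr0n lt0n; apply: contra_neq fin_fail => m0.
  by apply: (fail_part fin).1; apply: val_inj; rewrite (fin_part fin).2 //= m0.
apply: (Pval_eq_harmonic val_gp (survive_n_escape val_gp SA) (f := fun t => level t / m%:R)).
- by rewrite level_fin divff ?gt_eqF.
- by rewrite level_fail mul0r.
- by move=> t; rewrite divr_ge0 ?ler0n.
- by move=> t; rewrite ler_pdivrMr // mul1r ler_nat -ltnS ltn_ord.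
- exact: level_val_harmonic.
Qed.

End LevelValuation.

Theorem lemma18 (R : realType) (S : finType) (fin fail : S) (E : rel S)
  (m : nat) (part : S -> 'I_m.+1) :
  standing_assumptions R fin fail E ->
  mc_equivalence_partition R fin fail E part ->
  exists val : S -> S -> R,
    graph_preserving fin fail E val /\
    forall (i j : 'I_m.+1) (si sj : S), (i < j)%N -> part si = i -> part sj = j ->
      Pval fin fail val si < Pval fin fail val sj.
Proof.
move=> SA PART; exists (level_val R E part); split.
  exact: level_val_graph_preserving (fun u => standing_succ SA (u := u)).
move=> i j si sj lt_ij part_si part_sj; rewrite -part_si -part_sj in lt_ij.
rewrite !Pval_level_val // ltr_pM2r ?ltr_nat // invr_gt0 ltr0n.
by apply: leq_ltn_trans (leq0n _) (leq_trans lt_ij _); rewrite -ltnS.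
Qed.
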